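(* Let $A$ be a Lie conformal algebra, $M$ an $A$-module and $k\ge1$. If one of $a_1,\dots,a_k\in A$ is a torsion element of the $\mathbb F[\partial]$-module $A$, then $a_1\otimes\cdots\otimes a_k\otimes\phi=0$ in $\tilde\Gamma_k(A,M)$ for every $\phi$. In particular $\tilde\Gamma_k$ can be identified with the quotient of $\bar A^{\otimes k}\otimes\mathrm{Hom}(\mathbb F[\lambda_1,\dots,\lambda_k],M)$ by the relations (C1), (C2), where $\bar A=A/\mathrm{Tor}\,A$.
   Context: $\mathbb F$ field of characteristic 0; $A$ a Lie conformal algebra, $M$ an $A$-module (with $\partial$ acting on $M$ as $\partial^M$). $\mathrm{Hom}(\mathbb F[\lambda_1,\dots,\lambda_k],M)$ denotes the $\mathbb F$-linear maps. For $\phi$ in it, $\lambda_i^*\phi$ is $f\mapsto\phi(\lambda_if)$ and, for $\sigma\in S_k$, $\sigma^*\phi$ is $f(\lambda_1,\dots,\lambda_k)\mapsto\phi(f(\lambda_{\sigma(1)},\dots,\lambda_{\sigma(k)}))$. The space of basic $k$-chains $\tilde\Gamma_k(A,M)$ is the quotient of $A^{\otimes k}\otimes\mathrm{Hom}(\mathbb F[\lambda_1,\dots,\lambda_k],M)$ by the relations (C1) $a_1\otimes\cdots\otimes\partial a_i\otimes\cdots\otimes a_k\otimes\phi=-a_1\otimes\cdots\otimes a_k\otimes\lambda_i^*\phi$; (C2) $a_{\sigma(1)}\otimes\cdots\otimes a_{\sigma(k)}\otimes\sigma^*\phi=\mathrm{sign}(\sigma)\,a_1\otimes\cdots\otimes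 a_k\otimes\phi$ for all $\sigma\in S_k$. *)

From HB Require Import structures.
From mathcomp Require Import all_boot all_order all_algebra all_fingroup.
From mathcomp Require Import mpoly.
Set Implicit Arguments. Unset Strict Implicit. Unset Printing Implicit Defensive.
Import GRing.Theory.
Local Open Scope ring_scope.

Definition is_lin (F : fieldType) (U V : lmodType F) (f : U -> V) : Prop :=
  forall (c : F) (u v : U), f (c *: u + v) = c *: f u + f v.

Definition fin_supp (V : zmodType) (c : nat -> V) : Prop :=
  exists N, forall j, (N <= j)%N -> c j = 0.

(* coefficient of lambda^(j-1), or 0 when j = 0 : the coefficients of lambda * P(lambda) *)
Definition shift1 (V : zmodType) (c : nat -> V) (j : nat) : V :=
  if j is j'.+1 then c j' else 0.

Section LCA.
Variables (F : fieldType) (A : lmodType F).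

(* A Lie conformal algebra: an F[d]-module A (d = D, an F-linear endomorphism)
   with a lambda-bracket [a_lambda b] = \sum_j lambda^j br a b j  (in A[lambda]). *)
Definition is_LCA (D : A -> A) (br : A -> A -> nat -> A) : Prop :=
  [/\ is_lin D /\
      ((forall b j, is_lin (fun a => br a b j)) /\ (forall a j, is_lin (fun b => br a b j))),
      (forall a b, fin_supp (br a b)),
      (* [d a _lambda b] = - lambda [a_lambda b] *)
      (forall a b j, br (D a) b j = - shift1 (br a b) j) /\
      (* [a_lambda d b] = (d + lambda) [a_lambda b] *)
      (forall a b j, br a (D b) j = D (br a b j) + shift1 (br a b) j),
      (* skew-symmetry  [b_lambda a] = - [a_{-lambda-d} b] *)
      (forall a b N, (forall n, (N <= n)%N -> br a b n = 0) ->
         forall j, br b a j =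
           - \sum_(n < N) (((-1) ^+ n * ('C(n, j))%:R) *: iter (n - j)%N D (br a b n)))
    & (* Jacobi  [a_lambda [b_mu c]] = [[a_lambda b]_{lambda+mu} c] + [b_mu [a_lambda c]],
         coefficient of lambda^p mu^q *)
      (forall a b c p q, br a (br b c q) p =
         \sum_(s < p.+1) (('C((s + q)%N, s))%:R *: br (br a b (p - s)%N) c (s + q)%N)
         + br b (br a c p) q)].

Variables (M : lmodType F).

(* An A-module M: an F[d]-module (d acting as DM) with lambda-action
   a_lambda v = \sum_j lambda^j act a v j  (in M[lambda]). *)
Definition is_LCA_module (D : A -> A) (br : A -> A -> nat -> A)
    (DM : M -> M) (act : A -> M -> nat -> M) : Prop :=
  [/\ is_lin DM /\
      ((forall v j, is_lin (fun a => act a v j)) /\ (forall a j, is_lin (fun v => act a v j))),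
      (forall a v, fin_supp (act a v)),
      (* (d a)_lambda v = - lambda a_lambda v *)
      (forall a v j, act (D a) v j = - shift1 (act a v) j),
      (* a_lambda (d v) = (d + lambda) a_lambda v *)
      (forall a v j, act a (DM v) j = DM (act a v j) + shift1 (act a v) j)
    & (* a_lambda (b_mu v) - b_mu (a_lambda v) = [a_lambda b]_{lambda+mu} v,
         coefficient of lambda^p mu^q *)
      (forall a b v p q, act a (act b v q) p - act b (act a v p) q =
         \sum_(s < p.+1) (('C((s + q)%N, s))%:R *: act (br a b (p - s)%N) v (s + q)%N))].

Definition torsion (D : A -> A) (a : A) : Prop :=
  exists2 p : {poly F}, p != 0 & \sum_(i < size p) (p`_i *: iter i D a) = 0.

Variable (k : nat).

Definition upd (a : 'I_k -> A) (i : 'I_k) (x : A) : 'I_k -> A :=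
  fun j => if j == i then x else a j.

(* Hom(F[lambda_1..lambda_k], M) : the F-linear maps {mpoly F[k]} -> M (is_lin).
   lambda_i^* phi  and  sigma^* phi : *)
Definition lam_pull (i : 'I_k) (phi : {mpoly F[k]} -> M) : {mpoly F[k]} -> M :=
  fun f => phi ('X_i * f).
Definition perm_pull (s : 'S_k) (phi : {mpoly F[k]} -> M) : {mpoly F[k]} -> M :=
  fun f => phi (msym s f).

(* Linear maps out of  A^{(x)k} (x) Hom(F[lambda_1..lambda_k], M)  that kill the
   relations (C1), (C2), i.e. (by the universal property of the tensor product
   over F and of the quotient) linear maps out of  ~Gamma_k(A,M) : multilinear
   maps f(a_1,...,a_k, phi) into an F-vector space W satisfying (C1), (C2). *)
Definition chain_functional (D : A -> A) (W : lmodType F)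
    (f : ('I_k -> A) -> ({mpoly F[k]} -> M) -> W) : Prop :=
  [/\ (forall a i (c : F) x y phi, is_lin phi ->
         f (upd a i (c *: x + y)) phi = c *: f (upd a i x) phi + f (upd a i y) phi),
      (forall a (c : F) phi psi, is_lin phi -> is_lin psi ->
         f a (fun g => c *: phi g + psi g) = c *: f a phi + f a psi),
      (forall a i phi, is_lin phi ->
         f (upd a i (D (a i))) phi = - f a (lam_pull i phi))
    &
      (forall a (s : 'S_k) phi, is_lin phi ->
         f (fun j => a (s j)) (perm_pull s phi) = ((-1) ^+ s : F) *: f a phi)].

(* Equality of the classes of a_1 (x) ... (x) a_k (x) phi and b_1 (x)...(x) b_k (x) psi
   in ~Gamma_k(A,M): every linear map out of ~Gamma_k(A,M) agrees on them. *)
Definition chain_eq (D : A -> A) (a : 'I_k -> A) (phi : {mpoly F[k]} -> M)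
    (b : 'I_k -> A) (psi : {mpoly F[k]} -> M) : Prop :=
  forall (W : lmodType F) (f : ('I_k -> A) -> ({mpoly F[k]} -> M) -> W),
    chain_functional D f -> f a phi = f b psi.

Definition chain_zero (D : A -> A) (a : 'I_k -> A) (phi : {mpoly F[k]} -> M) : Prop :=
  forall (W : lmodType F) (f : ('I_k -> A) -> ({mpoly F[k]} -> M) -> W),
    chain_functional D f -> f a phi = 0.

End LCA.

(* If p(d) a_i = 0 with p = sum_n p_n d^n of degree N, then (C1) moves each
   d^n onto the functional, so a (x) phi' vanishes in ~Gamma_k whenever
   phi' = sum_n (-1)^n p_n (lambda_i^n)^* psi for a linear psi.  Every linear
   phi has this form: the polynomial q = sum_n (-1)^n p_n lambda_i^n has a
   unit leading coefficient in lambda_i, so psi can be built monomial by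
   monomial by solving a linear recurrence along the lambda_i-exponent.  The
   second claim follows by exchanging the entries one slot at a time. *)

From HB Require Import structures.
From mathcomp Require Import all_boot all_order all_algebra all_fingroup.
From mathcomp Require Import mpoly.
From mathcomp Require Import zify ssrcomplements.
From Stdlib Require Import FunctionalExtensionality.
Set Implicit Arguments. Unset Strict Implicit. Unset Printing Implicit Defensive.
Import GRing.Theory.
Local Open Scope ring_scope.

Section LinearMaps.
Variables (F : fieldType) (U V : lmodType F).

Lemma is_lin0 (f : U -> V) : is_lin f -> f 0 = 0.
Proof.
move=> f_lin; apply/(addrI (f 0)); rewrite addr0.
by rewrite -{1}(scale1r (f 0)) -f_lin scale1r addr0.
Qed.

Lemma is_lin_sum (f : U -> V) (T : Type) (s : seq T) (c : T -> F) (v : T -> U) :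
  is_lin f -> f (\sum_(x <- s) c x *: v x) = \sum_(x <- s) c x *: f (v x).
Proof.
move=> f_lin; elim: s => [|x s IH]; first by rewrite !big_nil is_lin0.
by rewrite !big_cons f_lin IH.
Qed.

Lemma is_lin_lincomb (T : Type) (s : seq T) (c : T -> F) (f : T -> U -> V) :
  (forall x, is_lin (f x)) -> is_lin (fun u => \sum_(x <- s) c x *: f x u).
Proof.
move=> f_lin a u v; rewrite scaler_sumr -big_split; apply: eq_bigr => x _ /=.
by rewrite f_lin scalerDr !scalerA mulrC.
Qed.

End LinearMaps.

Section LinearRecurrence.
Variables (F : fieldType) (V : lmodType F) (N : nat) (c : nat -> F) (u : nat -> V).
Hypothesis cN_neq0 : c N != 0.

(* Zero initial values; the fuel [t] suffices once [e < t], as the value at [e]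
   only uses the values at [e - N + n < e]. *)
Fixpoint recsol_fuel (t e : nat) : V :=
  if t is t'.+1 then
    if (e < N)%N then 0
    else (c N)^-1 *: (u (e - N) - \sum_(n < N) c n *: recsol_fuel t' (e - N + n))
  else 0.

Lemma recsol_fuel_stable t1 t2 e :
  (e < t1)%N -> (e < t2)%N -> recsol_fuel t1 e = recsol_fuel t2 e.
Proof.
elim: t1 t2 e => [//|t1 IH] [//|t2] e et1 et2 /=.
case: ltnP => // Ne; congr (_ *: (_ - _)); apply: eq_bigr => n _.
by congr (_ *: _); apply: IH; have := ltn_ord n; lia.
Qed.

Definition recsol (e : nat) : V := recsol_fuel e.+1 e.

Lemma recsolP e : \sum_(n < N.+1) c n *: recsol (e + n) = u e.
Proof.
rewrite big_ord_recr /= addrC {1}/recsol /= ltnNge leq_addl /= addnK.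
rewrite scalerA divff // scale1r.
rewrite [X in _ - X + _](_ : _ = \sum_(n < N) c n *: recsol (e + n)) ?subrK //.
apply: eq_bigr => n _; congr (_ *: _).
by apply: recsol_fuel_stable; have := ltn_ord n; lia.
Qed.

End LinearRecurrence.

Section MpolyFunctionals.
Variables (F : fieldType) (M : lmodType F) (k : nat).

Lemma is_lin_mpoly_eq (f g : {mpoly F[k]} -> M) :
  is_lin f -> is_lin g -> (forall m, f 'X_[m] = g 'X_[m]) -> f =1 g.
Proof.
move=> f_lin g_lin fgX p; rewrite (mpolyE p) !is_lin_sum //.
by apply: eq_bigr => m _; rewrite fgX.
Qed.

Definition lin_of_monomials (h : 'X_{1..k} -> M) (p : {mpoly F[k]}) : M :=
  \sum_(m <- msupp p) p@_m *: h m.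

Lemma lin_of_monomialsE h K p : (msize p <= K)%N ->
  lin_of_monomials h p = \sum_(m : 'X_{1..k < K}) p@_m *: h m.
Proof.
move=> p_small; rewrite /lin_of_monomials (big_mksub 'X_{1..k < K}) //=; first last.
- by move=> m /msize_mdeg_lt /leq_trans; apply.
- exact: msupp_uniq.
by rewrite big_rmcond //= => m /memN_msupp_eq0 ->; rewrite scale0r.
Qed.

Lemma lin_of_monomials_lin h : is_lin (lin_of_monomials h).
Proof.
move=> a p q; pose K := maxn (msize p) (msize q).
have p_small : (msize p <= K)%N by rewrite leq_maxl.
have q_small : (msize q <= K)%N by rewrite leq_maxr.
have pq_small : (msize (a *: p + q) <= K)%N.
  apply: leq_trans (msizeD_le _ _) _; rewrite geq_max q_small andbT.
  exact: leq_trans (msizeZ_le _ _) p_small.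
rewrite !(lin_of_monomialsE h pq_small, lin_of_monomialsE h p_small,
          lin_of_monomialsE h q_small) scaler_sumr -big_split /=.
by apply: eq_bigr => m _; rewrite mcoeffD mcoeffZ scalerDl scalerA.
Qed.

Lemma lin_of_monomialsX h m : lin_of_monomials h 'X_[m] = h m.
Proof. by rewrite /lin_of_monomials msuppX big_seq1 mcoeffX eqxx scale1r. Qed.

End MpolyFunctionals.

Section MonomialShift.
Variables (k : nat) (i : 'I_k).

Definition mnm_clear (m : 'X_{1..k}) : 'X_{1..k} := (m - U_(i) *+ m i)%MM.

Lemma mnmDU_at m n : (m + U_(i) *+ n)%MM i = (m i + n)%N.
Proof. by rewrite mnmDE mulmnE mnm1E eqxx mul1n. Qed.

Lemma mnm_clearDU m n : mnm_clear (m + U_(i) *+ n)%MM = mnm_clear m.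
Proof.
apply/mnmP => j; rewrite /mnm_clear !(mnmBE, mnmDE, mulmnE, mnm1E) eqxx.
by case: eqP => [->|_]; lia.
Qed.

Lemma mnm_clearK m : (mnm_clear m + U_(i) *+ m i)%MM = m.
Proof.
apply/mnmP => j; rewrite /mnm_clear !(mnmBE, mnmDE, mulmnE, mnm1E).
by case: eqP => [->|_]; lia.
Qed.

End MonomialShift.

(* The dual of multiplication by [q = \sum_n c n 'X_i^n] is onto when the
   leading coefficient [c N] is a unit: along each line [m + n U_(i)] the
   equation for [psi] is a linear recurrence of order [N]. *)
Lemma lin_pullback_mulX_onto (F : fieldType) (M : lmodType F) (k : nat) (i : 'I_k)
    (N : nat) (c : nat -> F) (phi : {mpoly F[k]} -> M) :
  c N != 0 -> is_lin phi ->
  exists2 psi : {mpoly F[k]} -> M, is_lin psi &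
    forall g, \sum_(n < N.+1) c n *: psi ('X_i ^+ n * g) = phi g.
Proof.
move=> cN_neq0 phi_lin.
pose h m := recsol N c (fun e => phi 'X_[mnm_clear i m + U_(i) *+ e]) (m i).
pose psi := lin_of_monomials h.
have psi_lin : is_lin psi := lin_of_monomials_lin h.
exists psi => //; apply: is_lin_mpoly_eq => //.
- apply: is_lin_lincomb => n a p q.
  by rewrite mulrDr -scalerAr psi_lin.
- move=> m; rewrite -[in RHS](mnm_clearK i m).
  rewrite -[RHS](recsolP (fun e => phi 'X_[mnm_clear i m + U_(i) *+ e]) cN_neq0).
  apply: eq_bigr => n _; congr (_ *: _).
  by rewrite mpolyXn -mpolyXD addmC /psi lin_of_monomialsX /h mnm_clearDU mnmDU_at.
Qed.

Section Updates.
Variables (F : fieldType) (A : lmodType F) (k : nat).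
Implicit Types (a : 'I_k -> A) (i : 'I_k).

Lemma upd_upd a i x y : upd (upd a i x) i y = upd a i y.
Proof. by apply: functional_extensionality => j; rewrite /upd; case: eqP. Qed.

Lemma upd_at a i x : upd a i x i = x.
Proof. by rewrite /upd eqxx. Qed.

Lemma upd_id a i : upd a i (a i) = a.
Proof. by apply: functional_extensionality => j; rewrite /upd; case: eqP => // ->. Qed.

End Updates.

Lemma lam_pull_lin (F : fieldType) (M : lmodType F) (k : nat) (i : 'I_k)
    (phi : {mpoly F[k]} -> M) :
  is_lin phi -> is_lin (lam_pull i phi).
Proof. by move=> phi_lin a p q; rewrite /lam_pull mulrDr -scalerAr phi_lin. Qed.

Lemma iter_lam_pull_lin (F : fieldType) (M : lmodType F) (k : nat) (i : 'I_k)
    (phi : {mpoly F[k]} -> M) n :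
  is_lin phi -> is_lin (iter n (lam_pull i) phi).
Proof. by move=> phi_lin; elim: n => //= n IH; apply: lam_pull_lin. Qed.

Lemma iter_lam_pullE (F : fieldType) (M : lmodType F) (k : nat) (i : 'I_k)
    (phi : {mpoly F[k]} -> M) n g :
  iter n (lam_pull i) phi g = phi ('X_i ^+ n * g).
Proof.
elim: n g => [|n IH] g /=; first by rewrite expr0 mul1r.
by rewrite {1}/lam_pull IH mulrA -exprSr.
Qed.

Section ChainFunctionals.
Variables (F : fieldType) (A M : lmodType F) (k : nat) (D : A -> A).
Variables (W : lmodType F) (f : ('I_k -> A) -> ({mpoly F[k]} -> M) -> W).
Hypothesis f_chain : chain_functional D f.

Lemma chain_upd0 a i phi : is_lin phi -> f (upd a i 0) phi = 0.
Proof.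
case: f_chain => f_slot _ _ _ phi_lin.
apply/(addrI (f (upd a i 0) phi)); rewrite addr0.
by rewrite -{1}(scale1r (f _ phi)) -f_slot // scale1r addr0.
Qed.

Lemma chain_upd_sum a i phi (T : Type) (s : seq T) (c : T -> F) (y : T -> A) :
  is_lin phi ->
  f (upd a i (\sum_(x <- s) c x *: y x)) phi = \sum_(x <- s) c x *: f (upd a i (y x)) phi.
Proof.
case: f_chain => f_slot _ _ _ phi_lin.
elim: s => [|x s IH]; first by rewrite !big_nil chain_upd0.
by rewrite !big_cons f_slot // IH.
Qed.

Lemma chain_zero_functional a : f a (fun _ => 0) = 0.
Proof.
case: f_chain => _ f_fun _ _.
have zero_lin : is_lin (fun _ : {mpoly F[k]} => 0 : M).
  by move=> ? ? ?; rewrite scaler0 addr0.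
apply/(addrI (f a (fun _ => 0))); rewrite addr0.
rewrite -{1}(scale1r (f a _)) -f_fun //; congr (f a _).
by apply: functional_extensionality => g; rewrite scaler0 addr0.
Qed.

Lemma chain_lincomb_functional a (T : Type) (s : seq T) (c : T -> F)
    (rho : T -> {mpoly F[k]} -> M) :
  (forall x, is_lin (rho x)) ->
  f a (fun g => \sum_(x <- s) c x *: rho x g) = \sum_(x <- s) c x *: f a (rho x).
Proof.
case: f_chain => _ f_fun _ _ rho_lin.
elim: s => [|x s IH].
  rewrite big_nil -(chain_zero_functional a); congr (f a _).
  by apply: functional_extensionality => g; rewrite big_nil.
rewrite big_cons -IH -f_fun //; last exact: is_lin_lincomb.
by congr (f a _); apply: functional_extensionality => g; rewrite big_cons.
Qed.

Lemma chain_upd_iterD a i y n phi : is_lin phi ->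
  f (upd a i (iter n D y)) phi = (-1) ^+ n *: f (upd a i y) (iter n (lam_pull i) phi).
Proof.
case: f_chain => _ _ f_C1 _.
elim: n phi => [|n IH] phi phi_lin /=; first by rewrite scale1r.
rewrite -(upd_upd a i (iter n D y)) -{2}(upd_at a i (iter n D y)) f_C1 //.
rewrite IH; last exact: lam_pull_lin.
by rewrite -iterS iterSr exprS mulN1r scaleNr.
Qed.

Lemma chain_torsion_slot a i phi : torsion D (a i) -> is_lin phi -> f a phi = 0.
Proof.
move=> [p p_neq0 p_tors] phi_lin.
pose N := (size p).-1.
have size_p : size p = N.+1 by rewrite /N prednK // size_poly_gt0.
pose c n := (-1) ^+ n * p`_n.
have cN_neq0 : c N != 0.
  by rewrite mulf_neq0 ?signr_eq0 // -lead_coefE lead_coef_eq0.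
have [psi psi_lin psiP] := lin_pullback_mulX_onto i cN_neq0 phi_lin.
have := chain_upd0 a i psi_lin; rewrite -p_tors size_p chain_upd_sum //.
under eq_bigr => n _ do rewrite chain_upd_iterD // upd_id scalerA.
rewrite -chain_lincomb_functional => [<-|n]; last exact: iter_lam_pull_lin.
congr (f a _); apply: functional_extensionality => g.
by rewrite -psiP; apply: eq_bigr => n _; rewrite iter_lam_pullE /c mulrC.
Qed.

Lemma chain_torsion_diff a a' phi :
  (forall i, torsion D (a i - a' i)) -> is_lin phi -> f a phi = f a' phi.
Proof.
case: f_chain => f_slot _ _ _ tors_diff phi_lin.
pose mixed j := fun l : 'I_k => if (l < j)%N then a' l else a l.
have mixed_step j (jk : (j < k)%N) : f (mixed j) phi = f (mixed j.+1) phi.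
  pose o := Ordinal jk.
  have -> : mixed j = upd (mixed j) o (1 *: (a o - a' o) + a' o).
    apply: functional_extensionality => l; rewrite /upd /mixed scale1r subrK.
    by case: eqP => [->|] //=; rewrite ltnn.
  have -> : mixed j.+1 = upd (mixed j) o (a' o).
    apply: functional_extensionality => l; rewrite /upd /mixed ltnS leq_eqVlt.
    case: (eqVneq l o) => [->|]; first by rewrite /= eqxx.
    by rewrite -val_eqE /= => /negbTE ->.
  rewrite f_slot // scale1r (@chain_torsion_slot _ o) ?add0r // upd_at.
  exact: tors_diff.
have mixed_le j : (j <= k)%N -> f a phi = f (mixed j) phi.
  by elim: j => [//|j IH] jk; rewrite IH ?(ltnW jk) // mixed_step.
have -> : a' = mixed k.
  by apply: functional_extensionality => l; rewrite /mixed ltn_ord.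
exact: mixed_le.
Qed.

End ChainFunctionals.

Theorem lemma3p2 (F : fieldType) (A M : lmodType F)
  (D : A -> A) (br : A -> A -> nat -> A) (DM : M -> M) (act : A -> M -> nat -> M)
  (k : nat) :
  [pchar F] =i pred0 ->
  is_LCA D br -> is_LCA_module D br DM act ->
  (1 <= k)%N ->
  (forall (a : 'I_k -> A) (phi : {mpoly F[k]} -> M),
     is_lin phi -> (exists i, torsion D (a i)) -> chain_zero D a phi)
  /\
  (forall (a a' : 'I_k -> A) (phi : {mpoly F[k]} -> M),
     is_lin phi -> (forall i, torsion D (a i - a' i)) -> chain_eq D a phi a' phi).
Proof.
move=> _ _ _ _; split.
- by move=> a phi phi_lin [i tors] W f f_chain; apply: chain_torsion_slot tors phi_lin.
- by move=> a a' phi phi_lin tors W f f_chain; apply: chain_torsion_diff tors phi_lin.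
Qed.
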